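(* Let $T=(V',E_T)$ be a finite tree rooted at a vertex $r$ that is a centroid of $T$. Then $S_c(T)=S_d(T)$.
   Context: For $x,y\in V'$, $d_T(x,y)$ is the number of edges on the path between $x$ and $y$ in $T$. The vertex deviation of $v\in V'$ is $m(v)=\frac{1}{|V'|}\sum_{u\in V'}d_T(v,u)$, and a centroid of $T$ is a vertex minimizing $m(v)$. $S_d(T)=\sum_{x\in V'} d_T(r,x)$ for the root $r$. For an edge $e\in E_T$, removing $e$ splits $T$ into two trees $T_1,T_2$; the cut number of $e$ is $c(e)=\min(|T_1|,|T_2|)$ (sizes counted in vertices), and $S_c(T)=\sum_{e\in E_T}c(e)$. *)

From mathcomp Require Import all_boot all_order all_algebra.
Set Implicit Arguments. Unset Strict Implicit. Unset Printing Implicit Defensive.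
Import Order.TTheory GRing.Theory Num.Theory.

(* A finite simple graph on vertex type T : finType is a symmetric,
   irreflexive relation e : rel T. *)
Section Trees.
Variables (T : finType) (e : rel T).

Definition is_tree : Prop :=
  (forall x y : T, connect e x y) /\
  (forall p : seq T, uniq p -> 3 <= size p -> ~~ cycle e p).

Definition walk_n (n : nat) (x y : T) : bool :=
  [exists p : n.-tuple T, path e x p && (last x p == y)].

(* d_T(x,y): least number of edges of a walk from x to y (in a tree, the
   number of edges of the unique path). Such a walk always has < #|T| edges
   in a connected graph. *)
Definition dist (x y : T) : nat := find (fun n => walk_n n x y) (iota 0 #|T|).

Definition deviation (v : T) : rat :=
  ((\sum_(u : T) dist v u)%:R / #|T|%:R)%R.

Definition is_centroid (r : T) : Prop := forall v : T, (deviation r <= deviation v)%R.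

Definition Sd (r : T) : nat := \sum_(x : T) dist r x.

Definition edges : {set {set T}} := [set [set x; y] | x in T, y in T & e x y].

Definition erase_edge (E : {set T}) : rel T :=
  fun a b => e a b && ([set a; b] != E).

(* cut number: removing E splits T into two trees, each containing one
   endpoint of E; c(E) = min of their sizes. *)
Definition cut_number (E : {set T}) : nat :=
  \big[minn/#|T|]_(x in E) #|[set z | connect (erase_edge E) x z]|.

Definition Sc : nat := \sum_(E in edges) cut_number E.

End Trees.

From mathcomp Require Import all_boot all_order all_algebra.
From HB Require Import structures.

(* In a tree, the edges on the path between x and y are exactly the edges whose
   removal separates x from y, so d(x, y) counts separating edges and
   S_d(T) = sum over edges E of the size of the side of E not containing r.
   At a centroid that far side is never the larger one: if it were larger for
   E = {a, b} with r on the side of a, moving from r to b would bring every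
   vertex of the far side d(r, b) closer while taking every other vertex at
   most d(r, b) further away, lowering the total distance.  Hence the far side
   is the smaller side and its size is the cut number of E. *)

Set Implicit Arguments. Unset Strict Implicit. Unset Printing Implicit Defensive.
Import GRing.Theory Num.Theory.

HB.instance Definition _ := SemiGroup.isComLaw.Build nat minn minnA minnC.

Lemma big_minn_set2 (T : finType) (n : nat) (F : T -> nat) (a b : T) :
  a != b -> \big[minn/n]_(x in [set a; b]) F x = minn (F a) (minn (F b) n).
Proof.
move=> neq_ab; rewrite (bigD1 a) ?set21 //= (bigD1 b) /=; last by rewrite set22 eq_sym.
by rewrite big_pred0 // => x; rewrite !inE; case: (x == a); case: (x == b).
Qed.

Lemma sum_mem_card (T : finType) (A : {set T}) :
  \sum_(u : T) (u \in A : nat) = #|A|.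
Proof.
by rewrite -sum1_card [RHS]big_mkcond; apply: eq_bigr => u _; case: (u \in A).
Qed.

Lemma find_iota_least (P : pred nat) (n k : nat) :
  P n -> (forall m, P m -> n <= m) -> n < k -> find P (iota 0 k) = n.
Proof.
move=> Pn n_least lt_nk.
have hasP : has P (iota 0 k) by apply/hasP; exists n; rewrite ?mem_iota.
have lt_find : find P (iota 0 k) < k by rewrite -[X in _ < X](size_iota 0) -has_find.
have := nth_find 0 hasP; rewrite nth_iota // add0n => /n_least le_n_find.
apply/eqP; rewrite eqn_leq le_n_find andbT leqNgt; apply/negP => lt_find_n.
by have := before_find 0 lt_find_n; rewrite nth_iota ?add0n ?Pn ?(ltn_trans lt_find_n).
Qed.

Section TreeSeparation.
Variables (T : finType) (e : rel T).
Hypothesis e_sym : symmetric e.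
Hypothesis e_irr : irreflexive e.
Hypothesis e_connected : forall x y : T, connect e x y.
Hypothesis e_acyclic : forall p : seq T, uniq p -> 3 <= size p -> ~~ cycle e p.

Local Notation erase := (erase_edge e).

Lemma erase_edge_sub E : subrel (erase E) e.
Proof. by move=> a b /andP[]. Qed.

Lemma erase_edge_sym E : symmetric (erase E).
Proof. by move=> a b; rewrite /erase_edge e_sym setUC. Qed.

Lemma connect_eraseC E x y : connect (erase E) x y = connect (erase E) y x.
Proof. exact/sym_connect_sym/erase_edge_sym. Qed.

Lemma erase_edgeI E a b : e a b -> [set a; b] != E -> erase E a b.
Proof. by move=> eab neqE; rewrite /erase_edge eab neqE. Qed.

Lemma path_erase_edge z z' x p :
  path e x p -> z \notin x :: p -> path (erase [set z; z']) x p.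
Proof.
elim: p x => [|y p IHp] x //= /andP[exy pyp].
rewrite !inE !negb_or => /and3P[zx zy zp].
rewrite IHp ?inE ?negb_or ?zy // andbT erase_edgeI //.
by apply: contraNneq zx => /setP/(_ z); rewrite !inE eqxx /= (negPf zy) orbF.
Qed.

Lemma connect_erase_edge (g : rel T) z z' x y : subrel g e ->
  connect g x y -> ~~ connect g x z -> connect (erase [set z; z']) x y.
Proof.
move=> sub_ge /connectP[p gxp ->] gxz; apply/connectP; exists p => //.
apply: path_erase_edge; first exact: sub_path gxp.
by apply: contra gxz => /(path_connect gxp).
Qed.

Lemma connect_uniq_path (g : rel T) x y : connect g x y ->
  exists p, [/\ path g x p, uniq (x :: p) & last x p = y].
Proof. by case/connectP => p gxp ->; case: (shortenP gxp) => q; exists q. Qed.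

Lemma erase_edge_disconnect a b : e a b -> ~~ connect (erase [set a; b]) a b.
Proof.
move=> eab; apply/negP => /connect_uniq_path[p [gap uap lap]].
case: p gap uap lap => [|c [|d q]] gap uap /= lap.
- by move: eab; rewrite lap e_irr.
- by move: gap; rewrite /= lap /erase_edge eqxx andbF.
move/negP: (e_acyclic uap isT); apply.
have ep := sub_path (@erase_edge_sub _) gap.
by rewrite /cycle rcons_path ep /= lap e_sym.
Qed.

Lemma erase_edge_sides a b z : e a b ->
  connect (erase [set a; b]) a z || connect (erase [set a; b]) b z.
Proof.
move=> eab; have [p [ep up lp]] := connect_uniq_path (e_connected a z).
case: (boolP (b \in p)) => [bp|bNp].
  apply/orP; right; move: ep lp up; case/splitPr: bp => p1 p2.
  rewrite cat_path last_cat cons_uniq mem_cat negb_or.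
  move=> /andP[_ /= /andP[_ ep2]] lp /andP[/andP[_ aNp2] _].
  by apply/connectP; exists p2 => //; apply: path_erase_edge.
apply/orP; left; rewrite setUC; apply/connectP; exists p => //.
apply: path_erase_edge => //; rewrite inE negb_or bNp andbT.
by apply: contraTneq eab => ->; rewrite e_irr.
Qed.

Lemma in_edges a b : e a b -> [set a; b] \in edges e.
Proof. by move=> eab; apply/imset2P; exists a b; rewrite ?inE. Qed.

Lemma edgesP E : E \in edges e -> exists a b, e a b /\ E = [set a; b].
Proof. by case/imset2P => a b _; rewrite inE => /andP[_ eab] ->; exists a, b. Qed.

Definition sep_edges x y := [set E in edges e | ~~ connect (erase E) x y].

Definition sep_dist x y := #|sep_edges x y|.

Lemma sep_edgesC x y : sep_edges x y = sep_edges y x.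
Proof. by apply/setP => E; rewrite !inE connect_eraseC. Qed.

Lemma sep_distC x y : sep_dist x y = sep_dist y x.
Proof. by rewrite /sep_dist sep_edgesC. Qed.

Lemma sep_dist_refl x : sep_dist x x = 0.
Proof.
by apply/eqP; rewrite cards_eq0; apply/eqP/setP => E; rewrite !inE connect0 andbF.
Qed.

Lemma sep_edges_trans x y z :
  sep_edges x z \subset sep_edges x y :|: sep_edges y z.
Proof.
apply/subsetP => E; rewrite !inE => /andP[-> nxz] /=.
by rewrite -negb_and; apply: contra nxz => /andP[]; apply: connect_trans.
Qed.

Lemma sep_dist_triangle x y z : sep_dist x z <= sep_dist x y + sep_dist y z.
Proof.
exact: leq_trans (subset_leq_card (sep_edges_trans x y z)) (leq_card_setU _ _).1.
Qed.

Lemma sep_edges_edge a b : e a b -> sep_edges a b = [set [set a; b]].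
Proof.
move=> eab; apply/setP => E; rewrite !inE.
case: eqP => [->|/eqP neqE]; first by rewrite in_edges ?erase_edge_disconnect.
by rewrite (connect1 (erase_edgeI eab _)) ?andbF // eq_sym.
Qed.

Lemma sep_dist_edge a b : e a b -> sep_dist a b = 1.
Proof. by move=> eab; rewrite /sep_dist sep_edges_edge ?cards1. Qed.

Lemma sep_dist_step x x' y : e x x' -> sep_dist x y <= (sep_dist x' y).+1.
Proof. by move=> exx'; rewrite -add1n -(sep_dist_edge exx') sep_dist_triangle. Qed.

Lemma sep_dist_path x p : path e x p -> sep_dist x (last x p) <= size p.
Proof.
elim: p x => [|y p IHp] x /=; first by rewrite sep_dist_refl.
case/andP=> exy /IHp le_yp.
by apply: leq_trans (sep_dist_step _ exy) _; rewrite ltnS.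
Qed.

Lemma sep_dist_next x y : x != y ->
  exists2 x', e x x' & sep_dist x y = (sep_dist x' y).+1.
Proof.
move=> neq_xy; have [p [ep up lp]] := connect_uniq_path (e_connected x y).
case: p ep up lp => [_ _ /= lp|x' q /= /andP[exx' ex'q] /andP[xNp _] lp].
  by rewrite lp eqxx in neq_xy.
exists x' => //.
have x'y : connect (erase [set x; x']) x' y.
  by apply/connectP; exists q => //; apply: path_erase_edge.
have xx'_sep : [set x; x'] \in sep_edges x y.
  rewrite inE in_edges //=; apply: contra (erase_edge_disconnect exx') => xy.
  by rewrite (connect_trans xy) // connect_eraseC.
have sub : sep_edges x' y \subset sep_edges x y :\ [set x; x'].
  apply/subsetP => E E_sep; have neqE : E != [set x; x'].
    by apply: contraTneq E_sep => ->; rewrite inE x'y andbF.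
  have := subsetP (sep_edges_trans x' x y) E E_sep.
  rewrite sep_edgesC sep_edges_edge // in_setU in_set1 (negPf neqE).
  by rewrite in_setD1 neqE.
apply/eqP; rewrite eqn_leq sep_dist_step //=.
rewrite /sep_dist (cardsD1 [set x; x'] (sep_edges x y)) xx'_sep.
by rewrite ltnS subset_leq_card.
Qed.

Lemma walk_nS n x x' y : e x x' -> walk_n e n x' y -> walk_n e n.+1 x y.
Proof.
move=> exx' /existsP[p /andP[ep lp]]; apply/existsP.
by exists [tuple of x' :: p]; rewrite /= exx' ep.
Qed.

Lemma walk_n_sep_dist x y : walk_n e (sep_dist x y) x y.
Proof.
move def_n : (sep_dist x y) => n; elim: n x def_n => [|n IHn] x;
  case: (eqVneq x y) => [<-|neq_xy] def_n.
- by apply/existsP; exists [tuple]; rewrite /= eqxx.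
- by have [x' _] := sep_dist_next neq_xy; rewrite def_n.
- by rewrite sep_dist_refl in def_n.
have [x' exx' def_n'] := sep_dist_next neq_xy.
by apply: walk_nS exx' (IHn _ _); move: def_n'; rewrite def_n => -[].
Qed.

Lemma walk_n_sep_dist_le n x y : walk_n e n x y -> sep_dist x y <= n.
Proof.
by case/existsP => p /andP[/sep_dist_path + /eqP <-]; rewrite size_tuple.
Qed.

Lemma sep_dist_lt_card x y : sep_dist x y < #|T|.
Proof.
have [p [ep up <-]] := connect_uniq_path (e_connected x y).
apply: leq_trans (max_card (mem (x :: p))).
by rewrite (card_uniqP up) ltnS sep_dist_path.
Qed.

Lemma dist_sep_dist x y : dist e x y = sep_dist x y.
Proof.
apply: find_iota_least (walk_n_sep_dist x y) _ (sep_dist_lt_card x y).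
by move=> m /walk_n_sep_dist_le.
Qed.

Definition far_side r E := [set x | ~~ connect (erase E) r x].

Lemma sum_sep_dist r :
  \sum_x sep_dist r x = \sum_(E in edges e) #|far_side r E|.
Proof.
transitivity (\sum_x \sum_(E in edges e) (E \in sep_edges r x : nat)).
  apply: eq_bigr => x _; rewrite /sep_dist -sum_mem_card [RHS]big_mkcond.
  by apply: eq_bigr => E _; rewrite inE; case: (E \in edges e).
rewrite exchange_big; apply: eq_bigr => E Ee; rewrite -sum_mem_card.
by apply: eq_bigr => x _; rewrite !inE Ee.
Qed.

Lemma far_sideE a b r : e a b -> connect (erase [set a; b]) a r ->
  far_side r [set a; b] = [set z | connect (erase [set a; b]) b z].
Proof.
move=> eab ar; apply/setP => z; rewrite !inE; apply/idP/idP => [rNz|bz].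
  case/orP: (erase_edge_sides z eab) => // az.
  by rewrite (connect_trans _ az) // connect_eraseC in rNz.
apply: contra (erase_edge_disconnect eab) => rz.
by rewrite (connect_trans ar) // (connect_trans rz) // connect_eraseC.
Qed.

Lemma sep_edges_disjoint a b r u : e a b ->
  connect (erase [set a; b]) a r -> connect (erase [set a; b]) b u ->
  [disjoint sep_edges r b & sep_edges b u].
Proof.
move=> eab ar bu; apply/pred0P => E /=; apply/negP.
rewrite !inE => /andP[/andP[Ee rNb] /andP[_ bNu]].
have [c [d [ecd defE]]] := edgesP Ee; rewrite {}defE in rNb bNu.
have [bc|bNc] := boolP (connect (erase [set a; b]) b c); last first.
  by rewrite (connect_erase_edge _ (@erase_edge_sub _) bu bNc) in bNu.
have : c \in far_side r [set a; b] by rewrite (far_sideE eab ar) inE.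
rewrite inE => rNc.
have cd_ab : [set a; b] != [set c; d] by apply: contraNneq bNu => <-.
move/negP: rNb; apply; rewrite (connect_trans _ (connect1 (erase_edgeI eab cd_ab))) //.
by apply: connect_erase_edge (@erase_edge_sub _) _ rNc; rewrite connect_eraseC.
Qed.

Lemma sep_dist_add a b r u : e a b ->
  connect (erase [set a; b]) a r -> connect (erase [set a; b]) b u ->
  sep_dist r b + sep_dist b u <= sep_dist r u.
Proof.
move=> eab ar bu; have dis := sep_edges_disjoint eab ar bu.
have /eqP <- :
  #|sep_edges r b :|: sep_edges b u| == sep_dist r b + sep_dist b u.
  by rewrite (leq_card_setU _ _).2.
apply: subset_leq_card.
apply/subsetP => E; rewrite inE => /orP[] E_sep.
  have := subsetP (sep_edges_trans r u b) E E_sep.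
  rewrite in_setU [sep_edges u b]sep_edgesC.
  by case/orP => // E_sep'; rewrite (disjointFr dis E_sep) in E_sep'.
have := subsetP (sep_edges_trans b r u) E E_sep.
rewrite in_setU [sep_edges b r]sep_edgesC.
by case/orP => // E_sep'; rewrite (disjointFr dis E_sep') in E_sep.
Qed.

Lemma far_side_le a b r : e a b -> connect (erase [set a; b]) a r ->
  \sum_u sep_dist r u <= \sum_u sep_dist b u ->
  #|far_side r [set a; b]| <= #|~: far_side r [set a; b]|.
Proof.
move=> eab ar r_min; set B := far_side r _; set k := sep_dist r b.
have farE : B = [set z | connect (erase [set a; b]) b z] by apply: far_sideE.
have b_far : b \in B by rewrite farE inE connect0.
have k_gt0 : 0 < k.
  apply/card_gt0P; exists [set a; b].
  by rewrite inE in_edges //=; move: b_far; rewrite inE.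
have pointwise u : sep_dist b u + k * (u \in B) <= sep_dist r u + k * (u \in ~: B).
  rewrite in_setC; case: (boolP (u \in B)) => uB /=; rewrite ?muln0 ?muln1 ?addn0.
    by rewrite addnC (sep_dist_add eab ar) //; move: uB; rewrite farE inE.
  by apply: leq_trans (sep_dist_triangle b r u) _; rewrite sep_distC addnC.
have : \sum_u (sep_dist b u + k * (u \in B))
       <= \sum_u (sep_dist r u + k * (u \in ~: B)).
  by apply: leq_sum => u _; apply: pointwise.
rewrite !big_split /= -!big_distrr /= !sum_mem_card => le_sums.
rewrite -(leq_pmul2l k_gt0) -(leq_add2l (\sum_u sep_dist b u)).
by apply: leq_trans le_sums _; rewrite leq_add2r.
Qed.

Lemma cut_number_far_side r E : E \in edges e ->
  (forall v, \sum_u sep_dist r u <= \sum_u sep_dist v u) ->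
  cut_number e E = #|far_side r E|.
Proof.
move=> /edgesP[a [b [eab ->]]] r_centroid.
wlog ar : a b eab / connect (erase [set a; b]) a r.
  move=> wlog_ar; case/orP: (erase_edge_sides r eab) => [|br].
    exact: wlog_ar.
  by rewrite setUC; apply: wlog_ar; rewrite 1?e_sym // setUC.
have neq_ab : a != b by apply: contraTneq eab => ->; rewrite e_irr.
have nearE : [set z | connect (erase [set a; b]) a z] = ~: far_side r [set a; b].
  apply/setP => z; rewrite !inE negbK; apply/idP/idP; apply: connect_trans => //.
  by rewrite connect_eraseC.
rewrite /cut_number big_minn_set2 // nearE -(far_sideE eab ar) (minn_idPl (max_card _)).
exact/minn_idPr/far_side_le.
Qed.

Lemma Sc_sum_sep_dist r :
  (forall v, \sum_u sep_dist r u <= \sum_u sep_dist v u) ->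
  Sc e = \sum_u sep_dist r u.
Proof.
move=> r_centroid; rewrite sum_sep_dist.
by apply: eq_bigr => E Ee; apply: cut_number_far_side.
Qed.

End TreeSeparation.

Theorem lemma5p13 (T : finType) (e : rel T) (r : T) :
  symmetric e -> irreflexive e -> is_tree e -> is_centroid e r ->
  Sc e = Sd e r.
Proof.
move=> e_sym e_irr [e_connected e_acyclic] r_centroid.
have distE := dist_sep_dist e_sym e_irr e_connected e_acyclic.
have T_gt0 : (0 < #|T|)%N by apply/card_gt0P; exists r.
rewrite /Sd (eq_bigr _ (fun u _ => distE r u)).
apply: (Sc_sum_sep_dist e_sym e_irr e_connected e_acyclic) => v.
rewrite -!(eq_bigr _ (fun u _ => distE _ u)).
by have := r_centroid v; rewrite /deviation ler_pM2r ?invr_gt0 ?ltr0n // ler_nat.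
Qed.
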